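(* Let $(G,\preceq)$ be an oriented group with positive cone $C=\{x\in G\mid\mathbf{1}\preceq x\}$, and let $H$ be a subgroup of $G$. On the quotient set $G/H=\{\overline{x}=x\cdot H\mid x\in G\}$ define $\overline{x}\sqsubseteq\overline{y}\iff x^{-1}\cdot y\in C\cdot H$. Then $(G/H,\sqsubseteq)$ is an oriented set if and only if $$(\ast)\qquad \text{for all } q,r\in G:\ \mathbf{1}\preceq q\ \wedge\ \mathbf{1}\preceq r\ \wedge\ q\cdot r\in H\implies q\in H\wedge r\in H.$$ Moreover, if $(\ast)$ holds and $H$ is a normal subgroup of $G$, then $(G/H,\sqsubseteq)$ is an oriented group.
   Context: An orientation is a reflexive, antisymmetric binary relation; an oriented set is a set with an orientation. An oriented group is a group $G$ (operation $\cdot$, neutral element $\mathbf{1}$) with an orientation $\preceq$ such that $x\preceq y$ implies $x\cdot z\preceq y\cdot z$ and $z\cdot x\preceq z\cdot y$ for all $x,y,z\in G$. *)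

From Stdlib Require Import ClassicalEpsilon.



Section OrientedGroups.
Context {T : Type} (mul : T -> T -> T) (inv : T -> T) (one : T).

Record group_axioms : Prop := GroupAxioms {
  mulA : forall x y z, mul x (mul y z) = mul (mul x y) z;
  mul1g : forall x, mul one x = x;
  mulg1 : forall x, mul x one = x;
  mulVg : forall x, mul (inv x) x = one;
  mulgV : forall x, mul x (inv x) = one
}.

Definition orientation {U : Type} (R : U -> U -> Prop) : Prop :=
  (forall x, R x x) /\ (forall x y, R x y -> R y x -> x = y).

Definition oriented_group (le : T -> T -> Prop) : Prop :=
  group_axioms /\ orientation le /\
  (forall x y z, le x y -> le (mul x z) (mul y z) /\ le (mul z x) (mul z y)).

Definition subgroup (H : T -> Prop) : Prop :=
  H one /\ (forall x y, H x -> H y -> H (mul x y)) /\ (forall x, H x -> H (inv x)).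

Definition normal_subgroup (H : T -> Prop) : Prop :=
  subgroup H /\ (forall g h, H h -> H (mul (mul g h) (inv g))).

Variables (le : T -> T -> Prop) (H : T -> Prop).

Definition cone (x : T) : Prop := le one x.
Definition in_CH (z : T) : Prop := exists c h, cone c /\ H h /\ z = mul c h.

Definition coset (x : T) : T -> Prop := fun y => H (mul (inv x) y).
Definition quot : Type := { S : T -> Prop | exists x, S = coset x }.
Definition qclass (x : T) : quot := exist _ (coset x) (ex_intro _ x eq_refl).

Definition qle (A B : quot) : Prop :=
  exists x y, proj1_sig A = coset x /\ proj1_sig B = coset y /\ in_CH (mul (inv x) y).

Definition qrep (A : quot) : T :=
  proj1_sig (constructive_indefinite_description _ (proj2_sig A)).
Definition qmul (A B : quot) : quot := qclass (mul (qrep A) (qrep B)).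
Definition qinv (A : quot) : quot := qclass (inv (qrep A)).
Definition qone : quot := qclass one.

Definition star_condition : Prop :=
  forall q r, le one q -> le one r -> H (mul q r) -> H q /\ H r.

End OrientedGroups.

(** The compatibility of the orientation with multiplication makes the cone
    [C] closed under conjugation, so [C.H] is stable under multiplication by
    [H] on both sides and [xbar [= ybar] does not depend on representatives.
    Reflexivity is then automatic.  For antisymmetry, [x^-1 y = c h] and
    [y^-1 x = c' h'] give [c * (h c' h^-1) = (h h')^-1 \in H] with both
    factors positive, so condition (star) forces [c \in H] and hence
    [xbar = ybar]; conversely, for positive [q], [r] with [q r \in H] one has
    [1bar [= qbar [= (q r)bar = 1bar].  When [H] is normal, the operations on
    [G/H] are the usual ones and [C.H] is also closed under conjugation,
    which gives compatibility on the right. *)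
From Pilot Require Import Defs.
From Stdlib Require Import ClassicalEpsilon FunctionalExtensionality.
From Stdlib Require Import PropExtensionality ProofIrrelevance.

Section GroupFacts.
Context {T : Type} (mul : T -> T -> T) (inv : T -> T) (one : T).
Hypothesis Hg : group_axioms mul inv one.

Lemma mulgK x y : mul (mul x y) (inv y) = x.
Proof. now rewrite <- (mulA _ _ _ Hg), (mulgV _ _ _ Hg), (mulg1 _ _ _ Hg). Qed.

Lemma mulgVK x y : mul (mul x (inv y)) y = x.
Proof. now rewrite <- (mulA _ _ _ Hg), (mulVg _ _ _ Hg), (mulg1 _ _ _ Hg). Qed.

Lemma invg_unique x y : mul x y = one -> inv x = y.
Proof.
  intro Exy.
  now rewrite <- (mulg1 _ _ _ Hg (inv x)), <- Exy, (mulA _ _ _ Hg), (mulVg _ _ _ Hg),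
    (mul1g _ _ _ Hg).
Qed.

Lemma invg1 : inv one = one.
Proof. apply invg_unique, (mul1g _ _ _ Hg). Qed.

Lemma invgK x : inv (inv x) = x.
Proof. apply invg_unique, (mulVg _ _ _ Hg). Qed.

Lemma invMg x y : inv (mul x y) = mul (inv y) (inv x).
Proof. apply invg_unique. now rewrite (mulA _ _ _ Hg), mulgK, (mulgV _ _ _ Hg). Qed.

End GroupFacts.

Section QuotientOrientation.
Context {T : Type} (mul : T -> T -> T) (inv : T -> T) (one : T).
Context (le : T -> T -> Prop) (H : T -> Prop).
Hypothesis Hg : group_axioms mul inv one.
Hypothesis le_refl : forall x, le x x.
Hypothesis le_compat : forall x y z,
  le x y -> le (mul x z) (mul y z) /\ le (mul z x) (mul z y).
Hypothesis HH : subgroup mul inv one H.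

Local Notation C := (cone one le).
Local Notation CH := (in_CH mul one le H).
Local Notation cl := (qclass mul inv H).
Local Notation qle := (qle mul inv one le H).

Ltac gsimpl := repeat progress rewrite
  ?(mulA _ _ _ Hg), ?(invMg _ _ _ Hg), ?(invgK _ _ _ Hg), ?(invg1 _ _ _ Hg),
  ?(mulgK _ _ _ Hg), ?(mulgVK _ _ _ Hg), ?(mulgV _ _ _ Hg), ?(mulVg _ _ _ Hg),
  ?(mul1g _ _ _ Hg), ?(mulg1 _ _ _ Hg).

Lemma H_one : H one.
Proof. apply HH. Qed.

Lemma H_mul x y : H x -> H y -> H (mul x y).
Proof. apply HH. Qed.

Lemma H_inv x : H x -> H (inv x).
Proof. apply HH. Qed.

Lemma coset_eq x y : coset mul inv H x = coset mul inv H y <-> H (mul (inv x) y).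
Proof.
  split.
  - intro Exy. assert (Hy : coset mul inv H y y).
    { unfold coset. rewrite (mulVg _ _ _ Hg). apply H_one. }
    now rewrite <- Exy in Hy.
  - intro Hxy. extensionality z. apply propositional_extensionality. unfold coset. split.
    + replace (mul (inv y) z) with (mul (inv (mul (inv x) y)) (mul (inv x) z)) by now gsimpl.
      auto using H_mul, H_inv.
    + replace (mul (inv x) z) with (mul (mul (inv x) y) (mul (inv y) z)) by now gsimpl.
      auto using H_mul.
Qed.

Lemma quot_val_inj (A B : quot mul inv H) : proj1_sig A = proj1_sig B -> A = B.
Proof. destruct A, B; simpl; intros ->. f_equal. apply proof_irrelevance. Qed.

Lemma qrep_spec (A : quot mul inv H) : proj1_sig A = coset mul inv H (qrep mul inv H A).
Proof.
  unfold qrep. now destruct (constructive_indefinite_description _ _).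
Qed.

Lemma qclass_surj (A : quot mul inv H) : exists x, A = cl x.
Proof. exists (qrep mul inv H A). apply quot_val_inj, qrep_spec. Qed.

Lemma qclass_eq x y : cl x = cl y <-> H (mul (inv x) y).
Proof.
  rewrite <- coset_eq. split.
  - intro Exy. exact (f_equal (@proj1_sig _ _) Exy).
  - intro Exy. now apply quot_val_inj.
Qed.

Lemma qrep_qclass x : H (mul (inv x) (qrep mul inv H (cl x))).
Proof. apply coset_eq, (qrep_spec (cl x)). Qed.

Lemma cone_conj c g : C c -> C (mul (mul g c) (inv g)).
Proof.
  unfold cone. intro Cc.
  destruct (le_compat _ _ g Cc) as [_ Cgc]. rewrite (mulg1 _ _ _ Hg) in Cgc.
  destruct (le_compat _ _ (inv g) Cgc) as [Cgcg _]. now rewrite (mulgV _ _ _ Hg) in Cgcg.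
Qed.

Lemma in_CH_mulr z h : CH z -> H h -> CH (mul z h).
Proof.
  intros [c [k [Cc [Hk ->]]]] Hh.
  exists c, (mul k h). repeat split; auto using H_mul. now gsimpl.
Qed.

Lemma in_CH_mull z h : CH z -> H h -> CH (mul h z).
Proof.
  intros [c [k [Cc [Hk ->]]]] Hh.
  exists (mul (mul h c) (inv h)), (mul h k). repeat split; auto using cone_conj, H_mul.
  now gsimpl.
Qed.

Lemma qle_qclass x y : qle (cl x) (cl y) <-> CH (mul (inv x) y).
Proof.
  split.
  - intros [x' [y' [Ex [Ey CHxy]]]]. simpl in Ex, Ey.
    apply coset_eq in Ex. apply coset_eq in Ey.
    replace (mul (inv x) y)
      with (mul (mul (inv x) x') (mul (mul (inv x') y') (inv (mul (inv y) y'))))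
      by now gsimpl.
    auto using in_CH_mull, in_CH_mulr, H_inv.
  - intro CHxy. now exists x, y.
Qed.

Lemma qle_refl A : qle A A.
Proof.
  destruct (qclass_surj A) as [x ->]. apply qle_qclass.
  exists one, one. unfold cone. repeat split; auto using H_one. now gsimpl.
Qed.

Lemma qle_antisym_of_star :
  star_condition mul one le H -> forall A B, qle A B -> qle B A -> A = B.
Proof.
  intros Hstar A B. destruct (qclass_surj A) as [x ->], (qclass_surj B) as [y ->].
  rewrite !qle_qclass. intros [c [h [Cc [Hh Exy]]]] [c' [h' [Cc' [Hh' Eyx]]]].
  apply qclass_eq.
  assert (Ec : c = mul (mul (inv x) y) (inv h)) by (rewrite Exy; now gsimpl).
  assert (Ec' : c' = mul (mul (inv y) x) (inv h')) by (rewrite Eyx; now gsimpl).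
  assert (Hc : H c).
  { refine (proj1 (Hstar c (mul (mul h c') (inv h)) Cc (cone_conj _ _ Cc') _)).
    replace (mul c (mul (mul h c') (inv h))) with (inv (mul h h'))
      by (rewrite Ec, Ec'; now gsimpl).
    auto using H_inv, H_mul. }
  rewrite Exy. auto using H_mul.
Qed.

Lemma star_of_qle_antisym :
  (forall A B, qle A B -> qle B A -> A = B) -> star_condition mul one le H.
Proof.
  intros Hanti q r Cq Cr Hqr.
  assert (E1q : cl one = cl q).
  { apply Hanti.
    - apply qle_qclass. exists q, one. repeat split; auto using H_one. now gsimpl.
    - replace (cl one) with (cl (mul q r)) by (apply qclass_eq; rewrite (mulg1 _ _ _ Hg); auto using H_inv).
      apply qle_qclass. exists r, one. repeat split; auto using H_one. now gsimpl. }
  apply qclass_eq in E1q. rewrite (invg1 _ _ _ Hg), (mul1g _ _ _ Hg) in E1q.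
  split; [exact E1q|].
  replace r with (mul (inv q) (mul q r)) by now gsimpl.
  auto using H_mul, H_inv.
Qed.

Lemma orientation_qle_star :
  orientation qle <-> star_condition mul one le H.
Proof.
  split.
  - intros [_ Hanti]. now apply star_of_qle_antisym.
  - intro Hstar. split; [exact qle_refl | now apply qle_antisym_of_star].
Qed.

Section NormalSubgroup.
Hypothesis H_conj : forall g h, H h -> H (mul (mul g h) (inv g)).

Local Notation qmul := (qmul mul inv H).
Local Notation qinv := (qinv mul inv H).
Local Notation qone := (qone mul inv one H).

Lemma in_CH_conj z g : CH z -> CH (mul (mul g z) (inv g)).
Proof.
  intros [c [h [Cc [Hh ->]]]].
  exists (mul (mul g c) (inv g)), (mul (mul g h) (inv g)).
  repeat split; auto using cone_conj. now gsimpl.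
Qed.

Lemma qmul_qclass x y : qmul (cl x) (cl y) = cl (mul x y).
Proof.
  unfold Defs.qmul. apply qclass_eq.
  pose proof (qrep_qclass x) as Hx. pose proof (qrep_qclass y) as Hy.
  set (x' := qrep mul inv H (cl x)) in *. set (y' := qrep mul inv H (cl y)) in *.
  replace (mul (inv (mul x' y')) (mul x y)) with
    (mul (inv (mul (inv y) y')) (mul (mul (inv y) (inv (mul (inv x) x'))) (inv (inv y))))
    by now gsimpl.
  auto using H_mul, H_inv.
Qed.

Lemma qinv_qclass x : qinv (cl x) = cl (inv x).
Proof.
  unfold Defs.qinv. apply qclass_eq.
  pose proof (qrep_qclass x) as Hx.
  set (x' := qrep mul inv H (cl x)) in *.
  replace (mul (inv (inv x')) (inv x)) with (mul (mul x (mul (inv x) x')) (inv x))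
    by now gsimpl.
  auto.
Qed.

Lemma quot_group_axioms : group_axioms qmul qinv qone.
Proof.
  unfold Defs.qone.
  constructor; intros A;
    [intros B Z; destruct (qclass_surj B) as [y ->], (qclass_surj Z) as [z ->] | ..];
    destruct (qclass_surj A) as [x ->];
    rewrite ?qinv_qclass, !qmul_qclass; f_equal; now gsimpl.
Qed.

Lemma qle_compat A B Z :
  qle A B -> qle (qmul A Z) (qmul B Z) /\ qle (qmul Z A) (qmul Z B).
Proof.
  destruct (qclass_surj A) as [x ->], (qclass_surj B) as [y ->], (qclass_surj Z) as [z ->].
  rewrite !qmul_qclass, !qle_qclass. intro CHxy. split.
  - replace (mul (inv (mul x z)) (mul y z))
      with (mul (mul (inv z) (mul (inv x) y)) (inv (inv z))) by now gsimpl.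
    now apply in_CH_conj.
  - now replace (mul (inv (mul z x)) (mul z y)) with (mul (inv x) y) by now gsimpl.
Qed.

End NormalSubgroup.
End QuotientOrientation.

Theorem mainTheorem11 (T : Type) (mul : T -> T -> T) (inv : T -> T) (one : T)
  (le : T -> T -> Prop) (H : T -> Prop) :
  oriented_group mul inv one le -> subgroup mul inv one H ->
  (orientation (qle mul inv one le H) <-> star_condition mul one le H) /\
  (star_condition mul one le H -> normal_subgroup mul inv one H ->
   oriented_group (qmul mul inv H) (qinv mul inv H) (qone mul inv one H)
     (qle mul inv one le H)).
Proof.
  intros [Hg [[le_refl _] le_compat]] HH.
  split.
  - now apply orientation_qle_star.
  - intros Hstar [_ H_conj]. split; [|split].
    + now apply quot_group_axioms.
    + now apply orientation_qle_star.
    + now apply qle_compat.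
Qed.
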